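(* Let $\mathcal{D}$ be a distribution on $[n]$, $\varepsilon>0$, and $T$ any binary search tree on $[n]$. There is a monotonicity tester for functions $f:[n]\to\mathbb{R}$ with respect to $\mathcal{D}$ with proximity parameter $\varepsilon$ that makes at most $24\,\varepsilon^{-1}\Delta(T;\mathcal{D})$ queries.
   Context: A binary search tree (BST) on $[n]$ has nodes labeled bijectively by $[n]$ with left descendants smaller and right descendants larger; $\mathrm{depth}_T(v)$ is the number of edges from $v$ to the root, and $\Delta(T;\mathcal{D})=\mathbb{E}_{v\sim\mathcal{D}}[\mathrm{depth}_T(v)]$. $f$ is monotone if $f(x)\le f(y)$ for $x\le y$. A monotonicity tester w.r.t. $\mathcal{D}$ with proximity parameter $\varepsilon$ accepts monotone $f$ with probability $>2/3$ and rejects with probability $>2/3$ any $f$ with $\min_{g\text{ monotone}}\Pr_{x\sim\mathcal{D}}[f(x)\ne g(x)]>\varepsilon$. *)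

From mathcomp Require Import all_boot all_order all_algebra.
From mathcomp Require Import reals.
Set Implicit Arguments. Unset Strict Implicit. Unset Printing Implicit Defensive.
Import Order.TTheory GRing.Theory Num.Theory.
Local Open Scope ring_scope.

(* [n] = {1,..,n} is represented by 'I_n = {0,..,n-1} (shift by one). *)
Inductive btree : Type :=
| Leaf : btree
| Node : btree -> nat -> btree -> btree.

Fixpoint keys (t : btree) : seq nat :=
  match t with
  | Leaf => [::]
  | Node l k r => keys l ++ k :: keys r
  end.

(* T is a BST on {0,..,n-1}: its in-order traversal lists every label
   exactly once, in increasing order; this says the labels are a bijection
   with {0,..,n-1} and that left descendants are smaller and right
   descendants larger. *)
Definition is_bst (n : nat) (t : btree) : Prop := keys t = iota 0 n.

(* number of edges from the node labelled v to the root (v assumed in t) *)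
Fixpoint depth (t : btree) (v : nat) : nat :=
  match t with
  | Leaf => 0
  | Node l k r =>
      if v == k then 0%N
      else if v \in keys l then (depth l v).+1 else (depth r v).+1
  end.

Definition is_distr (R : realType) (T : finType) (D : T -> R) : Prop :=
  (forall x, 0 <= D x) /\ \sum_(x : T) D x = 1.

Definition Delta (R : realType) (n : nat) (t : btree) (D : 'I_n -> R) : R :=
  \sum_(v : 'I_n) D v * (depth t v)%:R.

Definition monotone (R : realType) (n : nat) (f : 'I_n -> R) : Prop :=
  forall x y : 'I_n, (x <= y)%N -> f x <= f y.

Definition disagree (R : realType) (n : nat) (D : 'I_n -> R) (f g : 'I_n -> R) : R :=
  \sum_(x : 'I_n | f x != g x) D x.

(* min_{g monotone} Pr_D[f <> g] > eps  (the minimum is attained, since the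
   disagreement probability takes finitely many values) *)
Definition far (R : realType) (n : nat) (D : 'I_n -> R) (eps : R) (f : 'I_n -> R) : Prop :=
  forall g : 'I_n -> R, monotone g -> eps < disagree D f g.

(* A deterministic adaptive query algorithm for f : 'I_n -> R: either stops
   with an output (true = accept), or queries f at a point and continues
   depending on the answer. *)
Inductive qalg (R : Type) (n : nat) : Type :=
| Done : bool -> qalg R n
| Query : 'I_n -> (R -> qalg R n) -> qalg R n.

Fixpoint run (R : Type) (n : nat) (A : qalg R n) (f : 'I_n -> R) : bool :=
  match A with
  | Done b => b
  | Query i k => run (k (f i)) f
  end.

Fixpoint nqueries (R : Type) (n : nat) (A : qalg R n) (f : 'I_n -> R) : nat :=
  match A with
  | Done _ => 0%N
  | Query i k => (nqueries (k (f i)) f).+1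
  end.

(* A randomized query algorithm: a (finitely supported) probability
   distribution over deterministic query algorithms. *)
Record rtester (R : realType) (n : nat) := RTester {
  rt_space : finType;
  rt_prob : rt_space -> R;
  rt_alg : rt_space -> qalg R n }.

Definition acc_prob (R : realType) (n : nat) (A : rtester R n) (f : 'I_n -> R) : R :=
  \sum_(w : rt_space A | run (@rt_alg _ _ A w) f) @rt_prob _ _ A w.

Definition rej_prob (R : realType) (n : nat) (A : rtester R n) (f : 'I_n -> R) : R :=
  \sum_(w : rt_space A | ~~ run (@rt_alg _ _ A w) f) @rt_prob _ _ A w.

Definition is_mono_tester (R : realType) (n : nat) (D : 'I_n -> R) (eps : R)
    (A : rtester R n) : Prop :=
  is_distr (@rt_prob _ _ A) /\
  (forall f : 'I_n -> R, monotone f -> acc_prob A f > 2%:R / 3%:R) /\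
  (forall f : 'I_n -> R, far D eps f -> rej_prob A f > 2%:R / 3%:R).

Definition query_bound (R : realType) (n : nat) (A : rtester R n) (q : R) : Prop :=
  forall (w : rt_space A) (f : 'I_n -> R), (nqueries (@rt_alg _ _ A w) f)%:R <= q.

(* The tester samples k ~ 3/eps points v ~ D and, for each, queries v and its
   ancestors in T, rejecting if f is not monotone on some pair (v, ancestor).
   Two such "good" points u <= w have a common ancestor-or-self a with
   u <= a <= w (where the search paths to u and w part ways), so f is monotone
   on the good points and agrees there with a monotone function; hence a far f
   has bad mass > eps and passes all k samples with probability
   (1 - eps)^k < 1/3.  The expected number of queries is at most
   2 k Delta(T;D) <= 6 Delta(T;D)/eps, so rejecting once the budget
   24 Delta(T;D)/eps is exceeded costs a monotone f at most 1/4 by Markov. *)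

From mathcomp Require Import all_boot all_order all_algebra.
From mathcomp Require Import reals.
From mathcomp Require Import ring lra zify.
Set Implicit Arguments. Unset Strict Implicit. Unset Printing Implicit Defensive.
Import Order.TTheory GRing.Theory Num.Theory.

Fixpoint ancestors (t : btree) (v : nat) : seq nat :=
  match t with
  | Leaf => [::]
  | Node l k r =>
      if v == k then [::]
      else k :: (if v \in keys l then ancestors l v else ancestors r v)
  end.

Lemma size_ancestors t v : size (ancestors t v) = depth t v.
Proof.
by elim: t => //= l IHl k r IHr; case: ifP => //= _; case: ifP; rewrite ?IHl ?IHr.
Qed.

Lemma root_mem_ancestors l k r v : k \in v :: ancestors (Node l k r) v.
Proof. by rewrite /= inE; case: eqVneq => [->|_] //=; rewrite inE eqxx. Qed.

Lemma common_ancestor t u w :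
    pairwise ltn (keys t) -> u \in keys t -> w \in keys t -> (u <= w)%N ->
  exists a, [/\ a \in u :: ancestors t u, a \in w :: ancestors t w & (u <= a <= w)%N].
Proof.
elim: t => //= l IHl k r IHr.
rewrite pairwise_cat pairwise_cons => /and4P[/allrelP lk sl /allP kr sr].
have ltl x : x \in keys l -> (x < k)%N by move=> xl; apply: lk; rewrite ?inE ?eqxx.
have ltr x : x \in keys r -> (k < x)%N by move/kr.
have sub_l x a : x \in keys l -> a \in x :: ancestors l x ->
    a \in x :: ancestors (Node l k r) x.
  move=> xl; rewrite /= (ltn_eqF (ltl x xl)) xl !inE.
  by case/orP=> ->; rewrite ?orbT.
have sub_r x a : (k < x)%N -> a \in x :: ancestors r x ->
    a \in x :: ancestors (Node l k r) x.
  move=> kx; have xl : x \notin keys l by apply/negP => /ltl; lia.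
  rewrite /= (gtn_eqF kx) (negPf xl) !inE.
  by case/orP=> ->; rewrite ?orbT.
rewrite !mem_cat !inE => ut wt uw.
have [/andP[uk kw]|] := boolP (u <= k <= w)%N.
  by exists k; rewrite !root_mem_ancestors uk kw.
rewrite negb_and -!ltnNge => /orP[ku|wk].
- have inr x : [|| x \in keys l, x == k | x \in keys r] -> (k < x)%N -> x \in keys r.
    by case/or3P=> [/ltl|/eqP->|//]; lia.
  have [a [ua wa uaw]] := IHr sr (inr u ut ku) (inr w wt (leq_trans ku uw)) uw.
  by exists a; rewrite !sub_r //; lia.
- have inl x : [|| x \in keys l, x == k | x \in keys r] -> (x < k)%N -> x \in keys l.
    by case/or3P=> [//|/eqP->|/ltr]; lia.
  have [ul wl] := (inl u ut (leq_ltn_trans uw wk), inl w wt wk).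
  have [a [ua wa uaw]] := IHl sl ul wl uw.
  by exists a; rewrite !sub_l.
Qed.

Local Open Scope ring_scope.

Section PathTests.
Variables (R : realType) (n : nat).
Implicit Types (T : btree) (f g : 'I_n -> R) (u v w x y : 'I_n).

Definition anc T v : seq 'I_n := pmap insub (ancestors T v).

Definition ordered_pair f (x y : 'I_n) : bool :=
  ((x <= y)%N ==> (f x <= f y)) && ((y <= x)%N ==> (f y <= f x)).

Definition path_good T f v : bool := all (ordered_pair f v) (anc T v).

Lemma mem_anc T v (a : 'I_n) :
  (a \in v :: anc T v) = (val a \in val v :: ancestors T v).
Proof. by rewrite !inE mem_pmap_sub. Qed.

Lemma path_good_pair T f v a :
  path_good T f v -> a \in v :: anc T v -> ordered_pair f v a.
Proof.
move=> /allP good; rewrite inE => /orP[/eqP->|]; last exact: good.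
by rewrite /ordered_pair lexx leqnn.
Qed.

Lemma path_good_mono T f u w : is_bst n T ->
  path_good T f u -> path_good T f w -> (u <= w)%N -> f u <= f w.
Proof.
rewrite /is_bst => bst gu gw uw.
have sorted_keys : pairwise ltn (keys T).
  by rewrite bst -sorted_pairwise ?iota_ltn_sorted //; exact: ltn_trans.
have keysT (x : 'I_n) : val x \in keys T by rewrite bst mem_iota ltn_ord.
have [a [ua wa /andP[ua' aw]]] := common_ancestor sorted_keys (keysT u) (keysT w) uw.
pose a' := Ordinal (leq_ltn_trans aw (ltn_ord w)).
have ua_anc : a' \in u :: anc T u by rewrite mem_anc.
have wa_anc : a' \in w :: anc T w by rewrite mem_anc.
have /andP[/implyP le_ua _] := path_good_pair gu ua_anc.
have /andP[_ /implyP le_aw] := path_good_pair gw wa_anc.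
exact: le_trans (le_ua ua') (le_aw aw).
Qed.

Lemma monotone_extension f (P : pred 'I_n) :
    {in P &, forall x y, (x <= y)%N -> f x <= f y} ->
  exists2 g, monotone g & {in P, g =1 f}.
Proof.
move=> monoP.
pose m0 := \big[Num.min/0]_(y | P y) f y.
have m0_le y : P y -> m0 <= f y by move=> Py; rewrite /m0 (bigD1 y) //= ge_min lexx.
pose g x := \big[Num.max/m0]_(y | P y && (y <= x)%N) f y.
have le_g x y : P y -> (y <= x)%N -> f y <= g x.
  by move=> Py yx; rewrite /g (bigD1 y) ?Py ?yx //= le_max lexx.
have m0_g x : m0 <= g x.
  apply: (big_ind (fun z => m0 <= z)) => // [a b|y /andP[/m0_le]] //.
  by rewrite le_max => ->.
exists g => [x x' xx'|x Px].
  apply: (big_ind (fun z => z <= g x')) => // [a b ? ?|y /andP[Py yx]].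
    by rewrite ge_max; apply/andP.
  exact: le_g Py (leq_trans yx xx').
apply/eqP; rewrite eq_le le_g ?andbT //.
apply: (big_ind (fun z => z <= f x)) => [|a b ? ?|y /andP[Py yx]]; first exact: m0_le.
  by rewrite ge_max; apply/andP.
exact: monoP.
Qed.

Lemma far_outside_monotone_set D eps f (P : pred 'I_n) :
    is_distr D -> far D eps f -> {in P &, forall x y, (x <= y)%N -> f x <= f y} ->
  eps < \sum_(x | ~~ P x) D x.
Proof.
move=> [D_ge0 _] farf /monotone_extension[g mono_g gf].
apply: (lt_le_trans (farf g mono_g)); rewrite /disagree [leRHS]big_mkcond /=.
rewrite big_mkcond /=; apply: ler_sum => x _.
case: (boolP (P x)) => [Px|_] /=; first by rewrite gf // eqxx.
by case: ifP.
Qed.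

Lemma far_lt1 D eps f : is_distr D -> far D eps f -> eps < 1.
Proof.
move=> Ddistr farf; have := far_outside_monotone_set (P := pred0) Ddistr farf.
by case: Ddistr => _ <-; apply.
Qed.

(* A sample at the root needs no query at all, which keeps the cost within
   2 * depth. *)
Definition probe T v : seq 'I_n := if anc T v is [::] then [::] else v :: anc T v.

Lemma path_good_probe T f g v :
  {in probe T v, f =1 g} -> path_good T f v = path_good T g v.
Proof.
rewrite /probe /path_good; case: (anc T v) => // a s fg.
apply: eq_in_all => b bs; have fgv : f v = g v by rewrite fg ?mem_head.
by rewrite /ordered_pair fgv fg // inE bs orbT.
Qed.

Lemma size_probe T v : (size (probe T v) <= 2 * depth T v)%N.
Proof.
rewrite /probe -size_ancestors.
have : (size (anc T v) <= size (ancestors T v))%N by rewrite size_pmap_sub count_size.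
by case: (anc T v) => //= _ s; lia.
Qed.

Lemma monotone_path_good T f v : monotone f -> path_good T f v.
Proof. by move=> mono_f; apply/allP => a _; apply/andP; split; apply/implyP/mono_f. Qed.

End PathTests.

Section Queries.
Variables (R : Type) (n : nat).

Fixpoint query_all (ps : seq 'I_n) (k : seq R -> qalg R n) : qalg R n :=
  if ps is p :: ps' then Query p (fun y => query_all ps' (fun ys => k (y :: ys)))
  else k [::].

Lemma run_query_all ps k f : run (query_all ps k) f = run (k (map f ps)) f.
Proof. by elim: ps k => //= p ps IH k; rewrite IH. Qed.

Lemma nqueries_query_all ps k f :
  nqueries (query_all ps k) f = (size ps + nqueries (k (map f ps)) f)%N.
Proof. by elim: ps k => //= p ps IH k; rewrite IH. Qed.

End Queries.

Section IidSamples.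
Variables (R : comPzSemiRingType) (V : finType) (k : nat).
Implicit Types (D F c : V -> R) (w : {ffun 'I_k -> V}).

Definition iid_prob D w : R := \prod_i D (w i).

Lemma sum_iid_prod D F :
  \sum_w iid_prob D w * \prod_i F (w i) = (\sum_v D v * F v) ^+ k.
Proof.
rewrite -[k in RHS]card_ord -prodr_const bigA_distr_bigA /=.
by apply: eq_bigr => w _; rewrite /iid_prob -big_split.
Qed.

Lemma sum_iid_sum D c : \sum_v D v = 1 ->
  \sum_(w : {ffun 'I_k -> V}) iid_prob D w * \sum_i c (w i) = k%:R * \sum_v D v * c v.
Proof.
move=> D1; under eq_bigr do rewrite mulr_sumr.
rewrite exchange_big mulr_natl -[in RHS](card_ord k) -sumr_const; apply: eq_bigr => j _.
pose F i v := D v * (if i == j then c v else 1).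
transitivity (\sum_(w : {ffun 'I_k -> V}) \prod_i F i (w i)).
  apply: eq_bigr => w _; rewrite /F big_split /=; congr (_ * _).
  by rewrite (bigD1 j) //= eqxx big1 ?mulr1 // => i /negPf ->.
rewrite -bigA_distr_bigA (bigD1 j) //= [X in _ * X]big1 => [|i /negPf ij].
  by rewrite mulr1; apply: eq_bigr => v _; rewrite /F eqxx.
by rewrite -D1; apply: eq_bigr => v _; rewrite /F ij mulr1.
Qed.

End IidSamples.

Lemma iid_distr (R : realType) (V : finType) k (D : V -> R) :
  is_distr D -> is_distr (@iid_prob R V k D).
Proof.
move=> [D_ge0 D1]; split=> [w|]; first exact: prodr_ge0.
by rewrite /iid_prob -(bigA_distr_bigA (fun _ v => D v)) big1.
Qed.

Lemma markov_tail (R : realDomainType) (W : finType) (p c : W -> R) (a B : R) :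
    (forall w, 0 <= p w) -> (forall w, 0 <= c w) -> 0 <= a -> 0 <= B ->
    \sum_w p w * c w <= a * B ->
  \sum_(w | B < c w) p w <= a.
Proof.
move=> p_ge0 c_ge0 a_ge0 B_ge0 mean_le.
have pc_ge0 w : 0 <= p w * c w by rewrite mulr_ge0.
have [B_gt0|] := boolP (0 < B); last first.
  rewrite lt_def B_ge0 andbT negbK => /eqP B0; rewrite B0 mulr0 in mean_le.
  have mean0 : \sum_w p w * c w = 0 by apply/eqP; rewrite eq_le mean_le sumr_ge0.
  rewrite big1 // => w; rewrite B0 => c_gt0.
  have /eqP := psumr_eq0P (fun w _ => pc_ge0 w) mean0 (i := w) isT.
  by rewrite mulf_eq0 (gt_eqF c_gt0) orbF => /eqP.
rewrite -(ler_pM2r B_gt0); apply: le_trans mean_le.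
rewrite mulr_suml [leRHS](bigID (fun w => B < c w)) /= -[leLHS]addr0 lerD ?sumr_ge0 //.
by apply: ler_sum => w /ltW Bc; rewrite ler_wpM2l.
Qed.

Lemma bernoulli_le1 (R : realDomainType) (x : R) k : 0 <= x <= 1 ->
  (1 - x) ^+ k * (1 + k%:R * x) <= 1.
Proof.
move=> /andP[x_ge0 x_le1]; elim: k => [|k IH].
  by rewrite expr0 mul0r addr0 mulr1.
have p_ge0 : 0 <= (1 - x) ^+ k by rewrite exprn_ge0 // subr_ge0.
rewrite exprS -natr1; set p := (1 - x) ^+ k in IH p_ge0 *.
set K : R := k%:R in IH *.
have K_ge0 : 0 <= K by rewrite ler0n.
have : 0 <= p * (x * x * (K + 1)) by rewrite !mulr_ge0 ?addr_ge0.
nra.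
Qed.

Lemma Delta_ge0 (R : realType) n T (D : 'I_n -> R) : is_distr D -> 0 <= Delta T D.
Proof. by case=> D_ge0 _; apply: sumr_ge0 => v _; rewrite mulr_ge0. Qed.

Lemma rej_probE (R : realType) n (A : rtester R n) f :
  is_distr (@rt_prob _ _ A) -> rej_prob A f = 1 - acc_prob A f.
Proof.
case=> _ <-; rewrite /rej_prob /acc_prob.
rewrite [in RHS](bigID (fun w => run (rt_alg w) f)) /=.
by rewrite [X in X - _]addrC addrK.
Qed.

Section PathTester.
Variables (R : realType) (n : nat) (T : btree) (k : nat) (B : R) (D : 'I_n -> R).
Implicit Types (f : 'I_n -> R) (w : {ffun 'I_k -> 'I_n}).

Definition probes w : seq 'I_n := flatten [seq probe T (w i) | i <- enum 'I_k].

(* The final decision sees f only through the answers ys, reading the value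
   at x off the position of x in ps. *)
Definition path_test_alg w : qalg R n :=
  let ps := probes w in
  if B < (size ps)%:R then @Done R n false
  else query_all ps (fun ys =>
    @Done R n [forall i, path_good T (fun x => nth 0 ys (index x ps)) (w i)]).

Definition path_tester : rtester R n :=
  @RTester R n {ffun 'I_k -> 'I_n} (iid_prob D) path_test_alg.

Lemma path_tester_query_bound : 0 <= B -> query_bound path_tester B.
Proof.
move=> B_ge0 w f; rewrite /= /path_test_alg; case: ltP => //= size_le.
by rewrite nqueries_query_all addn0.
Qed.

Lemma run_path_test_alg w f :
  run (path_test_alg w) f = ((size (probes w))%:R <= B) && [forall i, path_good T f (w i)].
Proof.
rewrite /path_test_alg leNgt; case: ifP => //= _; rewrite run_query_all /=.
apply: eq_forallb => i; apply: path_good_probe => x xi.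
have xw : x \in probes w.
  by apply/flattenP; exists (probe T (w i)) => //; apply/mapP; exists i; rewrite ?mem_enum.
by rewrite (nth_map x) ?index_mem ?nth_index.
Qed.

Lemma size_probes w : (size (probes w) = \sum_i size (probe T (w i)))%N.
Proof. by rewrite /probes size_flatten /shape -map_comp sumnE big_map big_enum. Qed.

Hypothesis D_distr : is_distr D.

Lemma expected_probes :
  \sum_w iid_prob D w * (size (probes w))%:R <= k%:R * (2 * Delta T D).
Proof.
have [D_ge0 D1] := D_distr.
under eq_bigr do rewrite size_probes natr_sum.
rewrite (sum_iid_sum _ (fun v => (size (probe T v))%:R) D1) ler_wpM2l //.
rewrite /Delta mulr_sumr; apply: ler_sum => v _.
by rewrite mulrCA ler_wpM2l // -natrM ler_nat size_probe.
Qed.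

Lemma path_tester_accepts_monotone f : monotone f ->
  k%:R * (8 * Delta T D) <= B -> 3 / 4 <= acc_prob path_tester f.
Proof.
move=> mono_f kB.
have [D_ge0 D1] := iid_distr k D_distr.
have accE : acc_prob path_tester f = 1 - \sum_(w | B < (size (probes w))%:R) iid_prob D w.
  rewrite -[X in X - _]D1 (bigID (fun w => B < (size (probes w))%:R)) /= addrC addrK.
  apply: eq_bigl => w; rewrite /= run_path_test_alg -leNgt.
  have good : [forall i, path_good T f (w i)].
    by apply/forallP => i; exact: monotone_path_good.
  by rewrite good andbT.
have : \sum_(w | B < (size (probes w))%:R) iid_prob D w <= 4^-1.
  apply: (markov_tail (c := fun w => (size (probes w))%:R)) => //.
  - by rewrite invr_ge0.
  - by apply: le_trans kB; rewrite !mulr_ge0 ?(Delta_ge0 _ D_distr).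
  - by apply: le_trans expected_probes _; lra.
by rewrite accE; lra.
Qed.

Lemma path_tester_rejects_far eps f : is_bst n T -> far D eps f ->
  acc_prob path_tester f <= (1 - eps) ^+ k.
Proof.
move=> bst farf; have [D_ge0 D1] := D_distr.
have good_mono : {in path_good T f &, forall x y : 'I_n, (x <= y)%N -> f x <= f y}.
  by move=> x y; exact: path_good_mono.
have bad_gt := far_outside_monotone_set D_distr farf good_mono.
set G := \sum_v D v * (path_good T f v)%:R.
have GE : G = 1 - \sum_(v | ~~ path_good T f v) D v.
  rewrite -D1 (bigID (path_good T f)) /= addrK [RHS]big_mkcond /=.
  by apply: eq_bigr => v _; case: ifP; rewrite ?mulr1 ?mulr0.
apply: (@le_trans _ _ (G ^+ k)).
  rewrite -sum_iid_prod /acc_prob big_mkcond /=; apply: ler_sum => w _.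
  rewrite run_path_test_alg; case: ifP => [/andP[_ /forallP good]|_].
    by rewrite big1 ?mulr1 // => i _; rewrite good.
  by rewrite mulr_ge0 ?prodr_ge0 ?(iid_distr k D_distr).1.
have G_ge0 : 0 <= G by apply: sumr_ge0 => v _; rewrite mulr_ge0.
by rewrite lerXn2r ?nnegrE //; lra.
Qed.

End PathTester.

Lemma truncn_divr_bounds (R : archiRealFieldType) (c e : R) : 0 <= c -> 0 < e ->
  (Num.truncn (c / e))%:R * e <= c < (Num.truncn (c / e))%:R * e + e.
Proof.
move=> c_ge0 e_gt0; have := truncn_itv (divr_ge0 c_ge0 (ltW e_gt0)).
by rewrite -natr1 ler_pdivlMr // ltr_pdivrMr // mulrDl mul1r.
Qed.

Lemma expr1B_lt_third (R : realFieldType) (x : R) k :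
  0 <= x <= 1 -> 2 < k%:R * x -> (1 - x) ^+ k < 3^-1.
Proof.
move=> x01 kx_gt2; have := bernoulli_le1 k x01.
have : 0 <= (1 - x) ^+ k by case/andP: x01 => _ x_le1; rewrite exprn_ge0 // subr_ge0.
set q := (1 - x) ^+ k; set K := k%:R * x in kx_gt2 *.
nra.
Qed.

Theorem lemma4p2 (R : realType) (n : nat) (D : 'I_n -> R) (eps : R) (T : btree) :
  is_distr D -> 0 < eps -> is_bst n T ->
  exists A : rtester R n,
    is_mono_tester D eps A /\ query_bound A (24%:R / eps * Delta T D).
Proof.
move=> D_distr eps_gt0 bst.
have /andP[keps_le3 keps_gt3] := truncn_divr_bounds (ler0n R 3) eps_gt0.
set k := Num.truncn (3 / eps) in keps_le3 keps_gt3 *.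
set B := 24%:R / eps * Delta T D.
have Delta_nneg := Delta_ge0 T D_distr.
have kB : k%:R * (8 * Delta T D) <= B.
  have -> : B = 3 / eps * (8 * Delta T D) by rewrite /B; ring.
  by rewrite ler_wpM2r ?mulr_ge0 // ler_pdivlMr.
exists (path_tester T k B D); split.
  split; first exact: iid_distr.
  split=> f fP.
    by apply: lt_le_trans (path_tester_accepts_monotone D_distr fP kB); lra.
  have eps_lt1 := far_lt1 D_distr fP.
  have := path_tester_rejects_far k B D_distr bst fP.
  have : (1 - eps) ^+ k < 3^-1.
    by apply: expr1B_lt_third; [rewrite !ltW | lra].
  rewrite rej_probE; last exact: iid_distr.
  move=> small acc_le; lra.
by apply: path_tester_query_bound; apply: le_trans kB; rewrite !mulr_ge0 ?ler0n.
Qed.
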